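(* For all positive integers $n$ and $j$, $L_n(j)=A_n\big(10+6(j-1)\big)$.
   Context: The continued fraction $[a_1;a_2:\dots:a_k]$ means $a_1+1/(a_2+1/(\cdots+1/a_k))$. For a sequence $(a_1,\dots,a_k)$ of positive integers with $k\ge2$, $\breve K(a_1,\dots,a_k)$ is the integer $c$ where $[a_1;a_2:\dots:a_{k-1}]=c/d$ with $\gcd(c,d)=1$, $c,d>0$ (the last entry $a_k$ is omitted). For a positive integer $n$ let $a_n=n^2+3$, $b_n=n^4+5n^2+5$, $l_n=(na_n)^2+2$. Define $L_n(1)=\breve K(na_n,na_n,nb_n,nb_n)$, $L_n(2)=\breve K(na_n,na_n,na_n,na_n,nb_n,nb_n)$, and $L_n(j)=l_nL_n(j-1)-L_n(j-2)$ for $j>2$. Define $A_n(1)=1$, $A_n(2)=n(n^2+4)$, and $A_n(j)=nA_n(j-1)+A_n(j-2)$ for $j>2$. *)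

From HB Require Import structures.
From mathcomp Require Import all_boot all_order all_algebra.
Set Implicit Arguments. Unset Strict Implicit. Unset Printing Implicit Defensive.
Import Order.TTheory GRing.Theory Num.Theory.

Local Open Scope ring_scope.

Fixpoint cfrac (s : seq nat) : rat :=
  match s with
  | [::] => 0
  | [:: a] => a%:R
  | a :: t => a%:R + (cfrac t)^-1
  end.

(* \breve K(a_1,...,a_k): the numerator c (in lowest terms, c > 0) of
   [a_1; ...; a_{k-1}], i.e. the last entry is omitted. *)
Definition Kb (s : seq nat) : int :=
  match s with
  | [::] => 0
  | a :: t => numq (cfrac (belast a t))
  end.

Definition an (n : nat) : nat := (n ^ 2 + 3)%N.
Definition bn (n : nat) : nat := (n ^ 4 + 5 * n ^ 2 + 5)%N.
Definition ln (n : nat) : nat := ((n * an n) ^ 2 + 2)%N.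

Fixpoint Lseq (n : nat) (j : nat) : int :=
  match j with
  | 0%N => 0
  | 1%N => Kb [:: n * an n; n * an n; n * bn n; n * bn n]%N
  | 2%N => Kb [:: n * an n; n * an n; n * an n; n * an n; n * bn n; n * bn n]%N
  | S ((S ((S k) as k1)) as k2) => (ln n)%:Z * Lseq n k2 - Lseq n k1
  end.

Fixpoint Aseq (n : nat) (j : nat) : nat :=
  match j with
  | 0%N => 0%N
  | 1%N => 1%N
  | 2%N => (n * (n ^ 2 + 4))%N
  | S ((S ((S k) as k1)) as k2) => (n * Aseq n k2 + Aseq n k1)%N
  end.

From HB Require Import structures.
From mathcomp Require Import all_boot all_order all_algebra ring zify.
Import Order.TTheory GRing.Theory Num.Theory.
Local Open Scope ring_scope.

(* A continued fraction with positive partial quotients is the quotient of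
   two consecutive continuants, which are coprime; hence both L_n(1) and
   L_n(2) are continuants, and these evaluate to A_n(10) and A_n(16).  Since
   A_n follows the recurrence u_{k+1} = n u_k + u_{k-1}, its subsequence with
   step 6 follows u_{k+6} = l_n u_k - u_{k-6}, which is the recurrence
   defining L_n: l_n = n^6 + 6n^4 + 9n^2 + 2 is alpha^6 + beta^6 for the
   roots alpha, beta of x^2 = n x + 1. *)

(* [continuant_pair (a :: t)] is [(K (a :: t), K t)], with [K [::] = 1]. *)
Fixpoint continuant_pair (s : seq nat) : nat * nat :=
  match s with
  | [::] => (1, 0)
  | a :: t => let: (p, q) := continuant_pair t in (a * p + q, p)
  end%N.

Definition continuant (s : seq nat) : nat := (continuant_pair s).1.
Arguments continuant : simpl never.

Lemma continuant0 : continuant [::] = 1%N.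
Proof. by []. Qed.

Lemma continuant1 (a : nat) : continuant [:: a] = a.
Proof. by rewrite /continuant /= muln1 addn0. Qed.

Lemma continuantSS (a b : nat) (t : seq nat) :
  continuant [:: a, b & t] = (a * continuant (b :: t) + continuant t)%N.
Proof.
rewrite /continuant /=.
by case: (continuant_pair t) => p q; case: (b * p + q)%N.
Qed.

Lemma continuant_gt0 (s : seq nat) :
  all (fun a => 0 < a)%N s -> (0 < continuant s)%N.
Proof.
elim: s => [|a [|b t] IH] //=; first by rewrite continuant1 andbT.
move=> /andP[a0 bt0]; rewrite continuantSS addn_gt0.
by rewrite muln_gt0 a0 IH.
Qed.

Lemma coprime_continuant (a : nat) (t : seq nat) :
  coprime (continuant (a :: t)) (continuant t).
Proof.
elim: t a => [|b t IH] a; first by rewrite continuant1 coprimen1.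
by rewrite continuantSS /coprime gcdnC gcdnMDl; apply: IH.
Qed.

Lemma cfrac_continuant (a : nat) (t : seq nat) :
  all (fun a => 0 < a)%N t ->
  cfrac (a :: t) = (continuant (a :: t))%:R / (continuant t)%:R.
Proof.
elim: t a => [|b t IH] a; first by rewrite continuant1 divr1.
move=> /= /andP[b0 t0].
have Kbt0 : (continuant (b :: t))%:R != 0 :> rat.
  by rewrite pnatr_eq0 -lt0n continuant_gt0 //= b0.
rewrite -/(cfrac (b :: t)) IH // invf_div continuantSS natrD natrM.
by field.
Qed.

Lemma numq_nat_div (p q : nat) :
  coprime p q -> (0 < q)%N -> numq ((p%:R : rat) / q%:R) = p%:Z.
Proof.
move=> pq q0; have := @coprimeq_num p%:Z q%:Z; rewrite !absz_nat => /(_ pq).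
by rewrite !pmulrn => ->; rewrite gtr0_sg ?mul1r // ltz_nat.
Qed.

Lemma numq_cfrac (a : nat) (t : seq nat) :
  all (fun a => 0 < a)%N t -> numq (cfrac (a :: t)) = (continuant (a :: t))%:Z.
Proof.
move=> t0; rewrite cfrac_continuant // numq_nat_div ?coprime_continuant //.
exact: continuant_gt0.
Qed.

Lemma Kb_continuant (a b : nat) (t : seq nat) :
  all (fun a => 0 < a)%N (belast b t) ->
  Kb [:: a, b & t] = (continuant (a :: belast b t))%:Z.
Proof. exact: numq_cfrac. Qed.

Lemma Lseq1 (n : nat) : (0 < n)%N -> Lseq n 1 = (Aseq n 10)%:Z.
Proof.
move=> n0; cbn [Lseq]; rewrite Kb_continuant /=; last first.
  by rewrite !muln_gt0 n0 !addn_gt0 !orbT.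
by rewrite !continuantSS continuant1 continuant0 /an /bn; congr Posz; ring.
Qed.

Lemma Lseq2 (n : nat) : (0 < n)%N -> Lseq n 2 = (Aseq n 16)%:Z.
Proof.
move=> n0; cbn [Lseq]; rewrite Kb_continuant /=; last first.
  by rewrite !muln_gt0 n0 !addn_gt0 !orbT.
by rewrite !continuantSS continuant1 continuant0 /an /bn; congr Posz; ring.
Qed.

Lemma eq_linear_rec2 (R : pzRingType) (c d : R) (u v : nat -> R) :
  (forall k, u k.+2 = c * u k.+1 + d * u k) ->
  (forall k, v k.+2 = c * v k.+1 + d * v k) ->
  u 0%N = v 0%N -> u 1%N = v 1%N -> u =1 v.
Proof.
move=> urec vrec u0 u1 k.
suff [] : u k = v k /\ u k.+1 = v k.+1 by [].
elim: k => [|k [IHk IHk1]]; first by [].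
by split; last by rewrite urec vrec IHk IHk1.
Qed.

Lemma AseqSSS (n k : nat) : Aseq n k.+3 = (n * Aseq n k.+2 + Aseq n k.+1)%N.
Proof. by []. Qed.

Lemma Aseq_step6 (n k : nat) :
  (Aseq n (k + 13) + Aseq n k.+1 = ln n * Aseq n (k + 7))%N.
Proof.
rewrite !addnS addn0 !AseqSSS /ln /an.
set x := Aseq n k.+2; set y := Aseq n k.+1.
ring.
Qed.

Theorem lemma5 (n j : nat) :
  (0 < n)%N -> (0 < j)%N ->
  Lseq n j = ((Aseq n (10 + 6 * (j - 1))%N)%:Z)%R.
Proof.
move=> n0; case: j => [//|k] _; rewrite subn1 /=.
pose A6 i := (Aseq n (10 + 6 * i))%:Z.
apply: (@eq_linear_rec2 _ (ln n)%:Z (-1) (fun k => Lseq n k.+1) A6) => {k}.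
- by move=> k; rewrite mulN1r.
- move=> k; have step := Aseq_step6 n (9 + 6 * k).
  rewrite (_ : 9 + 6 * k + 13 = 10 + 6 * k.+2)%N in step; last by lia.
  rewrite (_ : 9 + 6 * k + 7 = 10 + 6 * k.+1)%N in step; last by lia.
  by rewrite mulN1r /A6 -PoszM -step PoszD addrK.
- by rewrite Lseq1.
- by rewrite Lseq2.
Qed.
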